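(* Let $T:\mathbf{Set}\to\mathbf{Set}$ be a functor. (1) For every monotone singleton-preserving $n$-ary predicate lifting $\lambda$ for $T$, the assignment $\tau_{\lambda,X}(x_1,\dots,x_n):=$ the unique element of $\lambda_X(\{x_1\},\dots,\{x_n\})$ (for $x_1,\dots,x_n\in X$) defines a natural transformation $\tau_\lambda:(-)^n\to T$. (2) If $\Lambda$ is a strongly expressive set of monotone singleton-preserving predicate liftings for $T$, then the maps $\alpha_X:\coprod_{\lambda/n\in\Lambda}X^n\to TX$ given on the $\lambda$-component by $\tau_{\lambda,X}$ form a natural transformation with surjective components; i.e., taking one $n$-ary operation symbol for each $\lambda/n\in\Lambda$, interpreted as $\tau_\lambda$, yields a presentation of $T$.
   Context: For $n\in\omega$, an $n$-ary predicate lifting for $T$ is a family of maps $\lambda_X:(\mathcal{P}X)^n\to\mathcal{P}(TX)$ natural w.r.t. preimages: for every $f:X\to Y$ and $A_i\subseteq Y$, $\lambda_X(f^{-1}[A_1],\dots,f^{-1}[A_n])=(Tf)^{-1}[\lambda_Y(A_1,\dots,A_n)]$. It is monotone if each $\lambda_X$ is monotone w.r.t. inclusion in every argument, and preserves singletons if $|\lambda_X(\{x_1\},\dots,\{x_n\})|=1$ for all sets $X$ and $x_1,\dots,x_n\in X$. A set $\Lambda$ of predicate liftings is strongly expressive if for every set $X$ and $t\in TX$ there exist $\lambda/n\in\Lambda$ and $x_1,\dots,x_n\in X$ with $\{t\}=\lambda_X(\{x_1\},\dots,\{x_n\})$. A signature is a family $\Sigma=(\Sigma_n)_{n\in\omega}$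 of sets; its polynomial functor is $T_\Sigma X=\coprod_n\Sigma_n\times X^n$. A presentation of $T$ is a pair $(\Sigma,\alpha)$ with $\alpha:T_\Sigma\to T$ a natural transformation all of whose components are surjective. *)

From mathcomp Require Import all_boot.
Set Implicit Arguments. Unset Strict Implicit. Unset Printing Implicit Defensive.

Record SetFunctor := {
  obj :> Type -> Type;
  fmap : forall (X Y : Type), (X -> Y) -> obj X -> obj Y;
  fmap_id : forall (X : Type) (t : obj X), fmap (fun x : X => x) t = t;
  fmap_comp : forall (X Y Z : Type) (f : X -> Y) (g : Y -> Z) (t : obj X),
      fmap (fun x => g (f x)) t = fmap g (fmap f t)
}.
Arguments fmap {s X Y} f t.

(* Subsets of X are predicates X -> Prop; an n-tuple of subsets is 'I_n -> (X -> Prop). *)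
Definition pred_lifting (T : SetFunctor) (n : nat) :=
  forall X : Type, ('I_n -> X -> Prop) -> (T X -> Prop).

Definition is_pred_lifting (T : SetFunctor) n (lam : pred_lifting T n) : Prop :=
  forall (X Y : Type) (f : X -> Y) (A : 'I_n -> Y -> Prop) (t : T X),
    lam X (fun i x => A i (f x)) t <-> lam Y A (fmap f t).

Definition monotone_lifting (T : SetFunctor) n (lam : pred_lifting T n) : Prop :=
  forall (X : Type) (A B : 'I_n -> X -> Prop),
    (forall i x, A i x -> B i x) -> forall t, lam X A t -> lam X B t.

Definition singletons (X : Type) n (x : 'I_n -> X) : 'I_n -> X -> Prop :=
  fun i y => y = x i.

Definition preserves_singletons (T : SetFunctor) n (lam : pred_lifting T n) : Prop :=
  forall (X : Type) (x : 'I_n -> X), exists! t, lam X (singletons x) t.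

(* tau_X(x_1..x_n) is an (hence, by singleton preservation, the unique)
   element of lambda_X({x_1},...,{x_n}) *)
Definition tau_spec (T : SetFunctor) n (lam : pred_lifting T n)
    (tau : forall X : Type, ('I_n -> X) -> T X) : Prop :=
  forall (X : Type) (x : 'I_n -> X), lam X (singletons x) (tau X x).

Definition natural_from_power (T : SetFunctor) n
    (tau : forall X : Type, ('I_n -> X) -> T X) : Prop :=
  forall (X Y : Type) (f : X -> Y) (x : 'I_n -> X),
    fmap f (tau X x) = tau Y (fun i => f (x i)).

(* a set Lambda of predicate liftings: an index type I, arities ar, liftings lam *)
Definition strongly_expressive (T : SetFunctor) (I : Type) (ar : I -> nat)
    (lam : forall i, pred_lifting T (ar i)) : Prop :=
  forall (X : Type) (t : T X), exists (i : I) (x : 'I_(ar i) -> X),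
    forall t', lam i X (singletons x) t' <-> t' = t.

(* signatures and polynomial functors T_Sigma X = coprod_n Sigma_n x X^n *)
Definition signature := nat -> Type.
Definition poly_obj (S : signature) (X : Type) : Type :=
  {n : nat & (S n * ('I_n -> X))%type}.
Definition poly_map (S : signature) (X Y : Type) (f : X -> Y)
    (u : poly_obj S X) : poly_obj S Y :=
  match u with existT n (s, x) => existT _ n (s, fun i => f (x i)) end.

Definition is_presentation (T : SetFunctor) (S : signature)
    (alpha : forall X : Type, poly_obj S X -> T X) : Prop :=
  (forall (X Y : Type) (f : X -> Y) (u : poly_obj S X),
      fmap f (alpha X u) = alpha Y (poly_map f u)) /\
  (forall (X : Type) (t : T X), exists u, alpha X u = t).

(* the signature with one n-ary symbol for each lambda/n in Lambda *)
Definition sig_of (I : Type) (ar : I -> nat) : signature :=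
  fun n => {i : I | ar i = n}.

Definition alpha_of (T : SetFunctor) (I : Type) (ar : I -> nat)
    (tau : forall i, forall X : Type, ('I_(ar i) -> X) -> T X)
    (X : Type) (u : poly_obj (sig_of ar) X) : T X :=
  match u with
  | existT n (exist i e, x) => tau i X (fun k => x (cast_ord e k))
  end.

(* The unique element of [lambda_X({x_1},...,{x_n})] is characterized by membership,
   so naturality of [tau_lambda] reduces to showing that [Tf] maps this element into
   [lambda_Y({f x_1},...,{f x_n})]. Naturality of [lambda] places it in
   [lambda_Y] applied to the sets [f^-1[{f x_i}]], which contain [{x_i}], and
   monotonicity gives the claim. Surjectivity of [alpha] is exactly strong
   expressiveness: every [t] is the unique element of some [lambda_X({x_1},...,{x_n})]. *)
From mathcomp Require Import all_boot.
From Stdlib Require Import ClassicalEpsilon FunctionalExtensionality.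

Section SingletonPreservingLiftings.

Variables (T : SetFunctor) (n : nat) (lam : pred_lifting T n).

Lemma lifting_singletons_fmap :
  is_pred_lifting lam -> monotone_lifting lam ->
  forall (X Y : Type) (f : X -> Y) (x : 'I_n -> X) (t : T X),
    lam X (singletons x) t -> lam Y (singletons (fun i => f (x i))) (fmap f t).
Proof.
move=> lam_nat lam_mono X Y f x t lam_t; apply/lam_nat.
by apply: lam_mono lam_t => i y ->.
Qed.

Lemma tau_spec_exists :
  preserves_singletons lam -> exists tau, tau_spec lam tau.
Proof.
move=> lam_single.
have pick X (x : 'I_n -> X) : {t | lam X (singletons x) t}.
  by apply: constructive_indefinite_description; have [t []] := lam_single X x; exists t.
by exists (fun X x => sval (pick X x)) => X x; exact: svalP.
Qed.

Lemma tau_spec_natural (tau : forall X : Type, ('I_n -> X) -> T X) :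
  is_pred_lifting lam -> monotone_lifting lam -> preserves_singletons lam ->
  tau_spec lam tau -> natural_from_power tau.
Proof.
move=> lam_nat lam_mono lam_single tau_lam X Y f x.
have [t [_ t_unique]] := lam_single Y (fun i => f (x i)).
rewrite -(t_unique _ (tau_lam Y _)); symmetry; apply: t_unique.
exact: lifting_singletons_fmap (tau_lam X x).
Qed.

End SingletonPreservingLiftings.

Section PresentationFromLiftings.

Variables (T : SetFunctor) (I : Type) (ar : I -> nat).
Variables (lam : forall i, pred_lifting T (ar i))
          (tau : forall i, forall X : Type, ('I_(ar i) -> X) -> T X).
Hypothesis tau_lam : forall i, tau_spec (lam i) (tau i).

Lemma alpha_of_natural :
  (forall i, is_pred_lifting (lam i)) -> (forall i, monotone_lifting (lam i)) ->
  (forall i, preserves_singletons (lam i)) ->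
  forall (X Y : Type) (f : X -> Y) (u : poly_obj (sig_of ar) X),
    fmap f (alpha_of tau u) = alpha_of tau (poly_map f u).
Proof.
move=> lam_nat lam_mono lam_single X Y f [m [[i e] x]] /=.
exact: tau_spec_natural (lam_nat i) (lam_mono i) (lam_single i) (tau_lam i) _ _ _ _.
Qed.

Lemma alpha_of_surjective :
  strongly_expressive lam ->
  forall (X : Type) (t : T X), exists u, alpha_of tau u = t.
Proof.
move=> lam_expr X t; have [i [x t_unique]] := lam_expr X t.
exists (existT _ (ar i) (exist _ i erefl, x)) => /=; apply/t_unique.
have -> : (fun k => x (cast_ord erefl k)) = x.
  by apply: functional_extensionality => k; rewrite cast_ord_id.
exact: tau_lam.
Qed.

End PresentationFromLiftings.

Theorem mainTheorem2 (T : SetFunctor) :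
  (forall (n : nat) (lam : pred_lifting T n),
      is_pred_lifting lam -> monotone_lifting lam -> preserves_singletons lam ->
      (exists tau, tau_spec lam tau) /\
      (forall tau, tau_spec lam tau -> natural_from_power tau))
  /\
  (forall (I : Type) (ar : I -> nat) (lam : forall i, pred_lifting T (ar i)),
      (forall i, is_pred_lifting (lam i)) ->
      (forall i, monotone_lifting (lam i)) ->
      (forall i, preserves_singletons (lam i)) ->
      strongly_expressive lam ->
      forall tau : forall i, forall X : Type, ('I_(ar i) -> X) -> T X,
        (forall i, tau_spec (lam i) (tau i)) ->
        is_presentation (alpha_of tau)).
Proof.
split.
  move=> n lam lam_nat lam_mono lam_single; split; first exact: tau_spec_exists.
  by move=> tau; exact: tau_spec_natural.
move=> I ar lam lam_nat lam_mono lam_single lam_expr tau tau_lam; split.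
  exact: alpha_of_natural.
exact: alpha_of_surjective.
Qed.
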